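(* Let $m\ge1$, $n_1=\cdots=n_m=2$, $I=(1,\ldots,1)$, $J=(2,\ldots,2)$ and $c\in\mathbb{C}\setminus\{0\}$. Then $\operatorname{hrank}(\mathcal{E}^{IJ}(c))=2m$, and a Hermitian rank decomposition is $$\mathcal{E}^{IJ}(c)=\frac{1}{2m}\Big([\tilde u_0,u_0,\ldots,u_0]_{\otimes h}+(-1)^m[\tilde u_m,u_m,\ldots,u_m]_{\otimes h}+\sum_{k=1}^{m-1}(-1)^k\big([\tilde u_k,u_k,\ldots,u_k]_{\otimes h}+[\tilde v_k,\overline{u_k},\ldots,\overline{u_k}]_{\otimes h}\big)\Big),$$ where $u_k=(1,e^{k\pi\sqrt{-1}/m})$, $\tilde u_k=(c,e^{k\pi\sqrt{-1}/m})$, $\tilde v_k=(c,e^{-k\pi\sqrt{-1}/m})$ for $k=0,\ldots,m$.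
   Context: $\mathbb{C}^{[2,\ldots,2]}$ ($m$ copies) is the real vector space of tensors $\mathcal{H}\in\mathbb{C}^{2\times\cdots\times2}$ of order $2m$ with $\mathcal{H}_{i_1\ldots i_m j_1\ldots j_m}=\overline{\mathcal{H}_{j_1\ldots j_m i_1\ldots i_m}}$. For $v_i\in\mathbb{C}^2$, $[v_1,\ldots,v_m]_{\otimes h}:=v_1\otimes\cdots\otimes v_m\otimes\overline{v_1}\otimes\cdots\otimes\overline{v_m}$. $\operatorname{hrank}(\mathcal{H})$ is the smallest $r$ such that $\mathcal{H}=\sum_{i=1}^r\lambda_i[u_i^1,\ldots,u_i^m]_{\otimes h}$ with $\lambda_i\in\mathbb{R}$, $u_i^j\in\mathbb{C}^2$. $\mathcal{E}^{IJ}(c)$ is the Hermitian tensor whose entry at $(I,J)=(1,\ldots,1,2,\ldots,2)$ is $c$, whose entry at $(J,I)$ is $\overline{c}$, and all other entries are zero. *)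

From mathcomp Require Import all_boot all_order all_algebra.
From mathcomp Require Import all_classical all_reals all_analysis.
From mathcomp.real_closed Require Import complex.
Import GRing.Theory Num.Theory.
Local Open Scope ring_scope.
Local Open Scope complex_scope.

Set Implicit Arguments. Unset Strict Implicit. Unset Printing Implicit Defensive.

(* A multi-index (i_1,...,i_m) with i_j in {1,2}; entry value k : 'I_2
   encodes the index k+1 (so 0 <-> 1, 1 <-> 2). *)
Definition midx (m : nat) := {ffun 'I_m -> 'I_2}.

(* A tensor in C^{2 x ... x 2} of order 2m: H(I, J) with I, J multi-indices. *)
Definition tensor (R : realType) (m : nat) := midx m -> midx m -> R[i].

Definition cvec (R : realType) := 'I_2 -> R[i].

Definition vec2 (R : realType) (a b : R[i]) : cvec R :=
  fun k => if (k : nat) == 0%N then a else b.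

Definition hermitian (R : realType) (m : nat) (H : tensor R m) : Prop :=
  forall I J, H I J = conjc (H J I).

(* [v_1,...,v_m]_{(x)h} = v_1 (x) ... (x) v_m (x) conj v_1 (x) ... (x) conj v_m *)
Definition htensor (R : realType) (m : nat) (v : 'I_m -> cvec R) : tensor R m :=
  fun I J => \prod_(j < m) (v j (I j) * conjc (v j (J j))).

Definition hdecomp (R : realType) (m : nat) (H : tensor R m) (r : nat) : Prop :=
  exists (lam : 'I_r -> R) (u : 'I_r -> 'I_m -> cvec R),
    H = fun I J => \sum_(i < r) (lam i)%:C * htensor (u i) I J.

Definition is_hrank (R : realType) (m : nat) (H : tensor R m) (r : nat) : Prop :=
  hdecomp H r /\ forall r', hdecomp H r' -> (r <= r')%N.

Definition idxI (m : nat) : midx m := [ffun _ => 0%R].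
Definition idxJ (m : nat) : midx m := [ffun _ => 1%R].

Definition EIJ (R : realType) (m : nat) (c : R[i]) : tensor R m :=
  fun A B =>
    if (A == idxI m) && (B == idxJ m) then c
    else if (A == idxJ m) && (B == idxI m) then conjc c
    else 0.

Definition expi (R : realType) (theta : R) : R[i] := cos theta +i* sin theta.

Definition firstrest (R : realType) (m : nat) (w v : cvec R) : 'I_m -> cvec R :=
  fun j => if (j : nat) == 0%N then w else v.

From mathcomp Require Import all_boot all_order all_algebra.
From mathcomp Require Import all_classical all_reals all_analysis.
From mathcomp.real_closed Require Import complex.
From mathcomp Require Import ring lra zify.
Import Order.TTheory GRing.Theory Num.Theory.
Local Open Scope ring_scope.
Local Open Scope complex_scope.

(* With w = e^(i pi / m) and |A| the number of indices of A equal to 2, the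
   (A, B) entry of [(c, w^k), (1, w^k), ..., (1, w^k)]_h is
   h_A conj(h_B) w^(k (|A| - |B|)) with h_1 = c, h_2 = 1.  Weighting by
   (-1)^k = w^(k m) and summing over k < 2m leaves 2m h_A conj(h_B) exactly when
   |A| - |B| + m = 0 mod 2m, i.e. when (A, B) is (I, J) or (J, I); pairing k with
   2m - k gives the stated decomposition.
   For the lower bound, contract the first index pair of a decomposition of
   E^{IJ}(c) in order m + 1 with a Hermitian 2 x 2 matrix [[p, w], [conj w, p]]:
   rank-one terms become real multiples of rank-one terms of order m, and
   E^{IJ}(c) becomes E^{IJ}(w c).  Since p and w != 0 can be chosen to annihilate
   two given terms, the number of nonzero coefficients drops by at least two, and
   induction on m starts from the fact that a single term H satisfies
   H_II H_JJ = |H_IJ|^2, which fails for E^{IJ}(c). *)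

Set Implicit Arguments.
Unset Strict Implicit.
Unset Printing Implicit Defensive.

Ltac complex_ring := apply/eqP; rewrite eq_complex /=; apply/andP; split; apply/eqP; ring.

Section Conjugation.
Context {R : rcfType}.

Lemma conjcM (x y : R[i]) : conjc (x * y) = conjc x * conjc y.
Proof. exact: rmorphM. Qed.

Lemma conjcX (x : R[i]) n : conjc (x ^+ n) = conjc x ^+ n.
Proof. exact: rmorphXn. Qed.

End Conjugation.

Section ComplexExponential.
Context {R : realType}.
Implicit Types a b : R.

Lemma expiD a b : expi (a + b) = expi a * expi b.
Proof. by rewrite /expi cosD sinD; complex_ring. Qed.

Lemma expiN a : expi (- a) = conjc (expi a).
Proof. by rewrite /expi cosN sinN. Qed.

Lemma expi0 : expi (0 : R) = 1.
Proof. by rewrite /expi cos0 sin0. Qed.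

Lemma expiMn n a : expi (n%:R * a) = expi a ^+ n.
Proof.
elim: n => [|n IHn]; first by rewrite mul0r expi0.
by rewrite exprS -IHn -expiD mulrS mulrDl mul1r.
Qed.

Lemma expi_pi : expi (pi : R) = -1.
Proof. by apply/eqP; rewrite /expi cospi sinpi eq_complex /= oppr0 !eqxx. Qed.

Lemma mulJ_expi a : conjc (expi a) * expi a = 1.
Proof. by rewrite -expiN -expiD addNr expi0. Qed.

Lemma expi_neq0 a : expi a != 0.
Proof. by apply: contra_eq_neq (mulJ_expi a) => ->; rewrite mulr0 eq_sym oner_neq0. Qed.

End ComplexExponential.

Definition omega (R : realType) (m : nat) : R[i] := expi (pi / m%:R).

Section Omega.
Context {R : realType} (m : nat).
Hypothesis m_gt0 : (0 < m)%N.
Local Notation w := (omega R m).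

Lemma expi_natmul_pi k : expi (k%:R * pi / m%:R) = w ^+ k.
Proof. by rewrite -mulrA expiMn. Qed.

Lemma omegaX_m : w ^+ m = -1.
Proof. by rewrite -expi_natmul_pi mulrAC divff ?mul1r ?expi_pi // pnatr_eq0 -lt0n. Qed.

Lemma omegaX_2m : w ^+ (2 * m) = 1.
Proof. by rewrite mulnC exprM omegaX_m sqrrN expr1n. Qed.

Lemma Im_omegaX_gt0 j : (0 < j)%N -> (j < m)%N -> 0 < complex.Im (w ^+ j).
Proof.
move=> j_gt0 j_lt_m; rewrite -expi_natmul_pi /=; apply: sin_gt0_pi.
have pi_pos : (0 : R) < pi := pi_gt0 R.
have m_gt0' : (0 : R) < m%:R by rewrite ltr0n.
have j_lt_m' : (j%:R : R) < m%:R by rewrite ltr_nat.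
rewrite divr_gt0 ?mulr_gt0 ?ltr0n //= ltr_pdivrMr //; nra.
Qed.

Lemma omegaX_neq1 j : (0 < j < 2 * m)%N -> w ^+ j != 1.
Proof.
case/andP => j_gt0 j_lt.
have [j_lt_m|m_le_j] := ltnP j m.
  by have := Im_omegaX_gt0 j_gt0 j_lt_m; apply: contraTneq => ->; rewrite ltxx.
rewrite -(subnKC m_le_j) exprD omegaX_m mulN1r eqr_oppLR.
have [->|jm_gt0] := posnP (j - m).
  by rewrite expr0 -subr_eq0 opprK -mulr2n pnatr_eq0.
have jm_lt_m : (j - m < m)%N by lia.
by have := Im_omegaX_gt0 jm_gt0 jm_lt_m; apply: contraTneq => ->; rewrite /= oppr0 ltxx.
Qed.

Lemma omega_prim : (2 * m)%N.-primitive_root w.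
Proof.
apply/andP; split; first by rewrite muln_gt0.
apply/forallP => i; rewrite unity_rootE.
have [->|ne] := eqVneq i.+1 (2 * m)%N; first by rewrite omegaX_2m eqxx.
have i_lt : (0 < i.+1 < 2 * m)%N by have := ltn_ord i; lia.
by rewrite (negbTE (omegaX_neq1 i_lt)).
Qed.

Lemma conj_omegaX k : (k <= 2 * m)%N -> conjc (w ^+ k) = w ^+ (2 * m - k).
Proof.
move=> k_le; apply: (mulIf (expf_neq0 k (expi_neq0 (pi / m%:R)))).
by rewrite -exprD subnK // omegaX_2m rmorphXn -exprMn mulJ_expi expr1n.
Qed.

End Omega.

Lemma sum_exprs_unity_root (F : idomainType) n (z : F) : z ^+ n = 1 ->
  \sum_(k < n) z ^+ k = if z == 1 then n%:R else 0.
Proof.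
move=> zn1; have [->|z_neq1] := eqVneq z 1.
  by rewrite (eq_bigr (fun=> 1)) ?sumr_const ?card_ord // => k _; rewrite expr1n.
have := subrX1 z n; rewrite zn1 subrr => /esym/eqP.
by rewrite mulf_eq0 subr_eq0 (negbTE z_neq1) => /eqP.
Qed.

Lemma sum_ord_double_fold (V : nmodType) n (F : nat -> V) :
  \sum_(k < 2 * n.+1) F k
  = F 0%N + F n.+1 + \sum_(1 <= k < n.+1) (F k + F (2 * n.+1 - k)%N).
Proof.
rewrite -(big_mkord xpredT) (big_cat_nat (n := n.+1)) //=; last by lia.
rewrite big_ltn // (big_ltn (m := n.+1)); last by lia.
rewrite big_split /=.
have -> : \sum_(n.+2 <= k < 2 * n.+1) F k = \sum_(1 <= k < n.+1) F (2 * n.+1 - k)%N.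
  rewrite big_nat_rev /= (big_addn 0 (2 * n.+1) n.+2) (big_addn 0 n.+1 1).
  have -> : (2 * n.+1 - n.+2 = n.+1 - 1)%N by lia.
  by apply: eq_big_nat => k /andP[_ k_lt]; congr F; lia.
by rewrite addrACA addrA.
Qed.

Definition weight {m : nat} (A : midx m) : nat := \sum_(j < m) (A j : nat).

Lemma dvdn_weights m a b : (0 < m)%N -> (a <= m)%N -> (b <= m)%N ->
  (2 * m %| a + (2 * m - 1) * b + m)%N = ((a == 0) && (b == m)) || ((a == m) && (b == 0))%N.
Proof.
move=> m_gt0 a_le b_le.
have -> : (a + (2 * m - 1) * b + m = (a + m - b) + b * (2 * m))%N by nia.
rewrite (dvdn_addl _ (dvdn_mull b (dvdnn (2 * m)))).
have [x0|x_gt0] := posnP (a + m - b); first by rewrite x0 dvdn0; lia.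
apply/idP/idP => [/(dvdn_leq x_gt0)|]; first by lia.
by move=> ?; have -> : (a + m - b = 2 * m)%N by lia.
Qed.

Section MultiIndex.
Context {m : nat}.
Implicit Types A B : midx m.

Lemma weight_le A : (weight A <= m)%N.
Proof.
by rewrite -[leqRHS]card_ord -sum1_card; apply: leq_sum => j _; exact: (ltn_ord (A j)).
Qed.

Lemma weight_eq0 A : (weight A == 0%N) = (A == idxI m).
Proof.
rewrite /weight sum_nat_eq0; apply/forallP/eqP => [eqA | -> j]; last by rewrite ffunE.
by apply/ffunP => j; rewrite ffunE; apply/val_inj/eqP/eqA.
Qed.

Lemma weight_eq_m A : (weight A == m) = (A == idxJ m).
Proof.
have := leqif_sum (fun (j : 'I_m) (_ : true) => leqif_eq (ltn_ord (A j) : (A j <= 1)%N)).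
rewrite /weight sum1_card card_ord => -[_ ->].
apply/forallP/eqP => [eqA | -> j]; last by rewrite ffunE.
by apply/ffunP => j; rewrite ffunE; apply/val_inj/eqP/eqA.
Qed.

Lemma idxI_neq_idxJ : (0 < m)%N -> idxI m != idxJ m.
Proof. by move=> m_gt0; apply/eqP => /ffunP /(_ (Ordinal m_gt0)); rewrite !ffunE. Qed.

End MultiIndex.

Section SignedSum.
Context {R : realType}.

Lemma vec2_0 (x z : R[i]) : vec2 x z 0 = x.
Proof. by []. Qed.

Lemma vec2_1 (x z : R[i]) : vec2 x z 1 = z.
Proof. by []. Qed.

Lemma vec2X (x z : R[i]) (a : 'I_2) : vec2 x z a = vec2 x 1 a * z ^+ a.
Proof. by case: a => [[|[|a]] ?] //; rewrite /vec2 /= ?mulr1 ?mul1r ?expr1. Qed.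

Lemma vec2_1X (z : R[i]) (a : 'I_2) : vec2 1 z a = z ^+ a.
Proof. by rewrite vec2X /vec2 if_same mul1r. Qed.

Lemma htensor_firstrest_vec2 m (c z : R[i]) (A B : midx m.+1) :
  htensor (firstrest (vec2 c z) (vec2 1 z)) A B
  = vec2 c 1 (A ord0) * conjc (vec2 c 1 (B ord0)) * (z ^+ weight A * conjc z ^+ weight B).
Proof.
rewrite /htensor /weight !big_ord_recl /firstrest /=.
under eq_bigr => j _ do rewrite !vec2_1X rmorphXn.
rewrite big_split /= !prodrXr (vec2X c z (A ord0)) (vec2X c z (B ord0)).
by rewrite rmorphM rmorphXn !exprD; ring.
Qed.

Lemma signed_sum_htensor m (c : R[i]) (A B : midx m.+1) :
  let w := omega R m.+1 in
  \sum_(k < 2 * m.+1) (-1) ^+ k * htensor (firstrest (vec2 c (w ^+ k)) (vec2 1 (w ^+ k))) A B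
  = (2 * m.+1)%:R * EIJ c A B.
Proof.
move=> w; set h := vec2 c 1 (A ord0) * conjc (vec2 c 1 (B ord0)).
set e := (weight A + (2 * m.+1 - 1) * weight B + m.+1)%N.
have wJ : conjc w = w ^+ (2 * m.+1 - 1) by rewrite -conj_omegaX ?expr1.
have term k : (-1) ^+ k * htensor (firstrest (vec2 c (w ^+ k)) (vec2 1 (w ^+ k))) A B
    = h * (w ^+ e) ^+ k.
  rewrite htensor_firstrest_vec2 conjcX wJ -(omegaX_m (ltn0Sn m)) -!exprM mulrCA -!exprD.
  by congr (_ * w ^+ _); rewrite /e; set t := (2 * m.+1 - 1)%N; ring.
under eq_bigr => k _ do rewrite term.
rewrite -mulr_sumr sum_exprs_unity_root; last by rewrite exprAC omegaX_2m ?expr1n.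
rewrite -(prim_order_dvd (omega_prim (ltn0Sn m))) dvdn_weights ?weight_le //.
rewrite !weight_eq0 !weight_eq_m /EIJ /h.
have [/andP[/eqP-> /eqP->] | nIJ] := boolP ((A == idxI _) && (B == idxJ _)).
  by rewrite !ffunE vec2_0 vec2_1 conjc1 mulr1 mulrC.
have [/andP[/eqP-> /eqP->] | nJI] := boolP ((A == idxJ _) && (B == idxI _)).
  by rewrite !ffunE vec2_0 vec2_1 mul1r mulrC.
by rewrite !mulr0.
Qed.

End SignedSum.

Section HermitianForm.
Context {R : realType}.

(* The sum over x, y of M_xy v_x conj(v_y) for M = [[p, w], [conj w, p]], the
   matrix with which [contract p w] pairs the first two indices of a tensor. *)
Definition hform (p : R) (w : R[i]) (v : cvec R) : R[i] :=
  p%:C * (v 0 * conjc (v 0) + v 1 * conjc (v 1)) + w * (v 0 * conjc (v 1))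
  + conjc (w * (v 0 * conjc (v 1))).

Lemma hform_real p w v : (complex.Re (hform p w v))%:C = hform p w v.
Proof.
rewrite /hform; case: (v 0) => [a1 a2]; case: (v 1) => [b1 b2]; case: w => [w1 w2].
by complex_ring.
Qed.

(* Two real-linear equations in the three real unknowns p, Re w, Im w always have
   a nonzero solution; the point is to get one with w != 0. *)
Lemma hermitian_pair_null (N1 N2 : R) (z1 z2 : R[i]) :
  0 <= N1 -> 0 <= N2 -> (N1 = 0 -> z1 = 0) -> (N2 = 0 -> z2 = 0) ->
  exists (p : R) (w : R[i]), w != 0 /\
    p%:C * N1%:C + w * z1 + conjc (w * z1) = 0 /\
    p%:C * N2%:C + w * z2 + conjc (w * z2) = 0.
Proof.
move=> N1_ge0 N2_ge0 z1_0 z2_0.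
set d := N1%:C * z2 - N2%:C * z1; set dJ := N1%:C * conjc z2 - N2%:C * conjc z1.
have dJE : conjc d = dJ by rewrite /dJ -(conjc_real N1) -(conjc_real N2) /d; ring.
have [d_neq0|d0] := boolP (d != 0).
  have iJ : conjc 'i = - 'i :> R[i] by apply/eqP; rewrite eq_complex /= oppr0 !eqxx.
  exists (2 * complex.Im (z1 * conjc z2)), ('i * conjc d); split.
    by rewrite mulf_neq0 ?conjc_eq0 // eq_complex /= oner_eq0 andbF.
  have pE : (2 * complex.Im (z1 * conjc z2))%:C = (conjc z1 * z2 - z1 * conjc z2) * 'i.
    by case: (z1) (z2) => [a1 a2] [b1 b2]; complex_ring.
  by rewrite pE !conjcM conjcK iJ dJE /dJ /d; split; ring.
have [N0|N_neq0] := eqVneq (N1 + N2) 0.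
  move/eqP: N0; rewrite paddr_eq0 // => /andP[/eqP/z1_0-> /eqP/z2_0->].
  by exists 0, 1; rewrite raddf0 !mul0r !mulr0 conjc0 !addr0 oner_neq0.
move: d0; rewrite negbK => /eqP d0.
have dJ0 : dJ = 0 by rewrite -dJE d0 conjc0.
exists (- 2 * (complex.Re z1 + complex.Re z2)), (N1 + N2)%:C; split.
  by rewrite eq_complex /= negb_and N_neq0.
have pE : (- 2 * (complex.Re z1 + complex.Re z2))%:C = - ((z1 + conjc z1) + (z2 + conjc z2)).
  by case: (z1) (z2) => [a1 a2] [b1 b2]; complex_ring.
rewrite pE !conjcM !conjc_real; split.
  by apply: (@eq_trans _ _ (- (d + dJ))); [rewrite /d /dJ; ring | rewrite d0 dJ0 addr0 oppr0].
by apply: (@eq_trans _ _ (d + dJ)); [rewrite /d /dJ; ring | rewrite d0 dJ0 addr0].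
Qed.

Definition sqnorm (v : cvec R) : R :=
  complex.Re (v 0) ^+ 2 + complex.Im (v 0) ^+ 2 + complex.Re (v 1) ^+ 2 + complex.Im (v 1) ^+ 2.

Lemma sqnormE v : v 0 * conjc (v 0) + v 1 * conjc (v 1) = (sqnorm v)%:C.
Proof.
by rewrite /sqnorm; case: (v 0) => [a1 a2]; case: (v 1) => [b1 b2]; complex_ring.
Qed.

Lemma sqnorm_eq0 v : sqnorm v = 0 -> v 0 = 0 /\ v 1 = 0.
Proof.
rewrite /sqnorm; case: (v 0) => [a1 a2]; case: (v 1) => [b1 b2] /= N0.
have [-> ->] : a1 = 0 /\ a2 = 0 by split; nra.
have [-> ->] : b1 = 0 /\ b2 = 0 by split; nra.
by split.
Qed.

Lemma hform_common_null (v1 v2 : cvec R) :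
  exists (p : R) (w : R[i]), w != 0 /\ hform p w v1 = 0 /\ hform p w v2 = 0.
Proof.
have sqnorm_ge0 v : 0 <= sqnorm v by rewrite /sqnorm; nra.
have cross0 v : sqnorm v = 0 -> v 0 * conjc (v 1) = 0.
  by case/sqnorm_eq0 => -> _; rewrite mul0r.
have [p [w [w0 [null1 null2]]]] :=
  hermitian_pair_null (sqnorm_ge0 v1) (sqnorm_ge0 v2) (cross0 v1) (cross0 v2).
by exists p, w; rewrite /hform !sqnormE.
Qed.

End HermitianForm.

Definition midx_cons {m : nat} (a : 'I_2) (A : midx m) : midx m.+1 :=
  [ffun j => if unlift ord0 j is Some j' then A j' else a].

Section MidxCons.
Context {m : nat}.
Implicit Types (a b : 'I_2) (A B : midx m).

Lemma midx_cons0 a A : midx_cons a A ord0 = a.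
Proof. by rewrite ffunE unlift_none. Qed.

Lemma midx_consS a A j : midx_cons a A (lift ord0 j) = A j.
Proof. by rewrite ffunE liftK. Qed.

Lemma midx_cons_eq a b A B : (midx_cons a A == midx_cons b B) = (a == b) && (A == B).
Proof.
apply/eqP/andP => [eqAB | [/eqP-> /eqP->]] //; split.
  by rewrite -(midx_cons0 a A) -(midx_cons0 b B) eqAB.
by apply/eqP/ffunP => j; rewrite -(midx_consS a A) -(midx_consS b B) eqAB.
Qed.

Lemma idxI_cons : idxI m.+1 = midx_cons 0 (idxI m).
Proof. by apply/ffunP => j; rewrite !ffunE; case: (unlift ord0 j) => [j'|]; rewrite ?ffunE. Qed.

Lemma idxJ_cons : idxJ m.+1 = midx_cons 1 (idxJ m).
Proof. by apply/ffunP => j; rewrite !ffunE; case: (unlift ord0 j) => [j'|]; rewrite ?ffunE. Qed.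

End MidxCons.

Section Contraction.
Context {R : realType}.

Definition hsum {m r : nat} (lam : 'I_r -> R) (u : 'I_r -> 'I_m -> cvec R) : tensor R m :=
  fun A B => \sum_(i < r) (lam i)%:C * htensor (u i) A B.

Definition contract {m : nat} (p : R) (w : R[i]) (H : tensor R m.+1) : tensor R m :=
  fun A B => p%:C * H (midx_cons 0 A) (midx_cons 0 B) + w * H (midx_cons 0 A) (midx_cons 1 B)
           + conjc w * H (midx_cons 1 A) (midx_cons 0 B) + p%:C * H (midx_cons 1 A) (midx_cons 1 B).

Lemma htensor_cons m (u : 'I_m.+1 -> cvec R) a b A B :
  htensor u (midx_cons a A) (midx_cons b B)
  = u ord0 a * conjc (u ord0 b) * htensor (fun j => u (lift ord0 j)) A B.
Proof.
rewrite /htensor big_ord_recl !midx_cons0; congr (_ * _).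
by apply: eq_bigr => j _; rewrite !midx_consS.
Qed.

Lemma contract_htensor m p w (u : 'I_m.+1 -> cvec R) A B :
  contract p w (htensor u) A B = hform p w (u ord0) * htensor (fun j => u (lift ord0 j)) A B.
Proof. by rewrite /contract /hform !htensor_cons !conjcM conjcK; ring. Qed.

Lemma contract_hsum m r p w (lam : 'I_r -> R) (u : 'I_r -> 'I_m.+1 -> cvec R) :
  contract p w (hsum lam u)
  = hsum (fun i => lam i * complex.Re (hform p w (u i ord0))) (fun i j => u i (lift ord0 j)).
Proof.
apply: funext => A; apply: funext => B.
rewrite /contract /hsum !mulr_sumr -!big_split; apply: eq_bigr => i _.
set h := hform p w (u i ord0).
have -> : (lam i * complex.Re h)%:C = (lam i)%:C * (complex.Re h)%:C by ring.
by rewrite hform_real -mulrA -contract_htensor /contract !mulrDr !(mulrCA _ (lam i)%:C).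
Qed.

Lemma contract_EIJ m p w (c : R[i]) : (0 < m)%N ->
  contract p w (@EIJ R m.+1 c) = EIJ (w * c).
Proof.
move=> m_gt0; apply: funext => A; apply: funext => B.
rewrite /contract /EIJ idxI_cons idxJ_cons !midx_cons_eq /=.
have IJ := idxI_neq_idxJ m_gt0; have JI : idxJ m != idxI m by rewrite eq_sym.
have [->|AI] := eqVneq A (idxI m); have [->|BJ] := eqVneq B (idxJ m);
  rewrite ?(negbTE IJ) ?(negbTE JI) ?(negbTE AI) ?(negbTE BJ) /= ?andbF.
all: rewrite !mulr0 !add0r ?addr0 //.
by case: ifP; rewrite ?conjcM ?mulr0.
Qed.

End Contraction.

Section LowerBound.
Context {R : realType}.

Lemma htensor_minor m (u : 'I_m -> cvec R) A B :
  htensor u A A * htensor u B B = htensor u A B * conjc (htensor u A B).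
Proof.
rewrite /htensor (big_morph conjc conjcM (conjc1 _)) -!big_split /=.
by apply: eq_bigr => j _; rewrite conjcM conjcK; ring.
Qed.

Lemma hsum_minor m r (lam : 'I_r -> R) (u : 'I_r -> 'I_m -> cvec R) A B :
  (#|support lam| <= 1)%N ->
  hsum lam u A A * hsum lam u B B = hsum lam u A B * conjc (hsum lam u A B).
Proof.
move=> supp_le1; have [i0 i0S | supp0] := pickP (support lam); last first.
  have hsum0 X Y : hsum lam u X Y = 0.
    by apply: big1 => i _; move/negbFE/eqP: (supp0 i) => ->; rewrite mul0r.
  by rewrite !hsum0 !mul0r.
have single X Y : hsum lam u X Y = (lam i0)%:C * htensor (u i0) X Y.
  rewrite /hsum (bigD1 i0) //= big1 ?addr0 // => i ne_i_i0.
  have : i \notin support lam.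
    apply: contraTN supp_le1 => iS; rewrite -ltnNge.
    by apply/card_gt1P; exists i, i0.
  by rewrite inE negbK => /eqP ->; rewrite mul0r.
by rewrite !single conjcM conjc_real mulrACA htensor_minor; ring.
Qed.

Lemma EIJ_support_gt1 m (c : R[i]) r (lam : 'I_r -> R) u :
  (0 < m)%N -> c != 0 -> @EIJ R m c = hsum lam u -> (1 < #|support lam|)%N.
Proof.
move=> m_gt0 c_neq0 E; rewrite ltnNge; apply: contra c_neq0 => supp_le1.
have := hsum_minor u (idxI m) (idxJ m) supp_le1; rewrite -E /EIJ !eqxx.
have IJ := idxI_neq_idxJ m_gt0; rewrite (negbTE IJ) eq_sym (negbTE IJ) /= mul0r.
by move/esym/eqP; rewrite mulf_eq0 conjc_eq0 orbb.
Qed.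

Lemma EIJ_support_ge m (c : R[i]) r (lam : 'I_r -> R) u :
  c != 0 -> @EIJ R m c = hsum lam u -> (2 * m <= #|support lam|)%N.
Proof.
elim: m c r lam u => [//|m IHm] c r lam u c_neq0 E.
have := EIJ_support_gt1 (ltn0Sn m) c_neq0 E.
case: m IHm u E => [|m] IHm u E; first by [].
case/card_gt1P => i1 [i2 [i1S i2S i12]].
have [p [w [w_neq0 [null1 null2]]]] := hform_common_null (u i1 ord0) (u i2 ord0).
have E' := congr1 (contract p w) E; rewrite contract_EIJ // contract_hsum in E'.
have := IHm _ _ _ _ (mulf_neq0 w_neq0 c_neq0) E'.
set lam' := fun i => _; move=> le_supp'.
have supp' : support lam' \subset [predD1 [predD1 support lam & i1] & i2].
  apply/fintype.subsetP => i; rewrite !inE /lam' mulf_eq0 negb_or => /andP[-> ReN0].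
  by rewrite andbT; apply/andP; split; apply: contraNneq ReN0 => ->; rewrite ?null1 ?null2.
rewrite (cardD1 i1) i1S (cardD1 i2) [i2 \in _]inE eq_sym i12 i2S /=.
rewrite mulnSr addn2 !add1n !ltnS.
exact: leq_trans le_supp' (subset_leq_card supp').
Qed.

End LowerBound.

Section Rank.
Context {R : realType}.

Lemma EIJ_signed_sum m (c : R[i]) :
  @EIJ R m.+1 c = fun A B => (2 * m.+1)%:R^-1 * \sum_(k < 2 * m.+1)
    (-1) ^+ k * htensor (firstrest (vec2 c (omega R m.+1 ^+ k)) (vec2 1 (omega R m.+1 ^+ k))) A B.
Proof.
by apply: funext => A; apply: funext => B; rewrite signed_sum_htensor mulKf // pnatr_eq0.
Qed.

Lemma is_hrank_EIJ m (c : R[i]) : c != 0 -> is_hrank (@EIJ R m.+1 c) (2 * m.+1).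
Proof.
move=> c_neq0; split=> [|r [lam [u E]]]; last first.
  by rewrite -[leqRHS](card_ord r); apply: leq_trans (EIJ_support_ge c_neq0 E) (max_card _).
exists (fun k => (-1) ^+ k / (2 * m.+1)%:R).
exists (fun k => firstrest (vec2 c (omega R m.+1 ^+ k)) (vec2 1 (omega R m.+1 ^+ k))).
rewrite {1}EIJ_signed_sum; apply: funext => A; apply: funext => B.
rewrite mulr_sumr; apply: eq_bigr => k _; rewrite mulrA; congr (_ * _).
by rewrite rmorphM rmorphXn rmorphN1 fmorphV rmorph_nat mulrC.
Qed.

End Rank.

Unset Implicit Arguments.

Theorem proposition2p2 (R : realType) (m : nat) (c : R[i]) :
  (1 <= m)%N -> c != 0 ->
  let om (k : nat) : R[i] := expi ((k%:R * pi) / m%:R) in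
  let omN (k : nat) : R[i] := expi (- ((k%:R * pi) / m%:R)) in
  let u (k : nat) : cvec R := vec2 1 (om k) in
  let ut (k : nat) : cvec R := vec2 c (om k) in
  let vt (k : nat) : cvec R := vec2 c (omN k) in
  let ubar (k : nat) : cvec R := fun l => conjc (u k l) in
  is_hrank (@EIJ R m c) (2 * m)
  /\ @EIJ R m c =
     (fun A B =>
        (2 * m)%:R^-1 *
        (htensor (firstrest (ut 0%N) (u 0%N)) A B
         + (-1) ^+ m * htensor (firstrest (ut m) (u m)) A B
         + \sum_(1 <= k < m)
             (-1) ^+ k *
             (htensor (firstrest (ut k) (u k)) A B
              + htensor (firstrest (vt k) (ubar k)) A B))).
Proof.
case: m => [//|m] _ c_neq0 om omN u ut vt ubar.
split; first exact: is_hrank_EIJ.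
set w := omega R m.+1.
have omE k : om k = w ^+ k by rewrite /om expi_natmul_pi.
have vtE k : (k <= 2 * m.+1)%N -> vt k = vec2 c (w ^+ (2 * m.+1 - k)).
  by move=> k_le; rewrite /vt /omN expiN -/(om k) omE conj_omegaX.
have ubarE k : (k <= 2 * m.+1)%N -> ubar k = vec2 1 (w ^+ (2 * m.+1 - k)).
  move=> k_le; apply: funext => l; rewrite /ubar /u /vec2.
  by case: ifP => _; rewrite ?conjc1 // omE conj_omegaX.
have signE k : (k <= 2 * m.+1)%N -> (-1) ^+ (2 * m.+1 - k) = (-1) ^+ k :> R[i].
  by move=> k_le; rewrite -signr_odd oddN ?signr_odd // oddM.
rewrite {1}EIJ_signed_sum; apply: funext => A; apply: funext => B; congr (_ * _).
rewrite (@sum_ord_double_fold _ m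
  (fun k => (-1) ^+ k * htensor (firstrest (vec2 c (w ^+ k)) (vec2 1 (w ^+ k))) A B)).
rewrite expr0 mul1r /ut /u !omE; congr (_ + _ + _).
apply: eq_big_nat => k /andP[k_ge1 k_lt]; have k_le : (k <= 2 * m.+1)%N by lia.
by rewrite mulrDr vtE // ubarE // signE // omE.
Qed.
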